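(* For any two $n$-qubit density matrices $\rho,\sigma$, $|\mathcal{C}(\rho)-\mathcal{C}(\sigma)|\le\|\rho-\sigma\|_1$.
   Context: For an $n$-qubit density matrix $\rho$, $\mathcal{C}(\rho)=1-\mathrm{Tr}[(\bigotimes_{i=1}^n\Pi_+^{(i)})\rho^{\otimes 2}]$, where $\Pi_+^{(i)}=\frac12(\mathbb{1}+\mathbb{F}^{(i)})$ and $\mathbb{F}^{(i)}$ swaps the $i$-th qubits of the two copies. $\|\cdot\|_1$ is the trace norm. *)

From HB Require Import structures.
From mathcomp Require Import all_boot all_order all_algebra.
From mathcomp Require Import sesquilinear spectral.
Set Implicit Arguments. Unset Strict Implicit. Unset Printing Implicit Defensive.
Import Order.TTheory GRing.Theory Num.Theory.
Local Open Scope ring_scope.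
Local Open Scope sesquilinear_scope.

Section Qubits.
Variable C : numClosedFieldType.

Definition psdmx (N : nat) (A : 'M[C]_N) : Prop :=
  forall v : 'rV[C]_N, 0 <= (v *m A *m v ^t*) 0 0.

Definition density_matrix (n : nat) (rho : 'M[C]_(2 ^ n)) : Prop :=
  [/\ rho \is hermsymmx, psdmx rho & \tr rho = 1].

Definition pair_of (N : nat) (k : 'I_(N * N)) : 'I_N * 'I_N :=
  enum_val (cast_ord (esym (@mxvec_cast N N)) k).

Definition tens (N : nat) (A B : 'M[C]_N) : 'M[C]_(N * N) :=
  \matrix_(a, b) (A (pair_of a).1 (pair_of b).1 * B (pair_of a).2 (pair_of b).2).

Definition qbit (n : nat) (x : 'I_(2 ^ n)) (i : 'I_n) : bool := odd (x %/ 2 ^ i).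

(* F^(i): swaps the i-th qubits of the two copies *)
Definition swapq (n : nat) (i : 'I_n) : 'M[C]_(2 ^ n * 2 ^ n) :=
  \matrix_(a, b)
    (let: (x, y) := pair_of a in let: (x', y') := pair_of b in
     [&& [forall j : 'I_n, (j != i) ==>
            ((qbit x j == qbit x' j) && (qbit y j == qbit y' j))],
         qbit x i == qbit y' i & qbit y i == qbit x' i]%:R).

Definition Pplus (n : nat) (i : 'I_n) : 'M[C]_(2 ^ n * 2 ^ n) :=
  2^-1 *: (1%:M + swapq i).

(* tensor product over i of the Pi_+^(i) (each acting on its own qubit pair),
   i.e. the product of the commuting operators Pi_+^(i) *)
Definition Pplus_all (n : nat) : 'M[C]_(2 ^ n * 2 ^ n) :=
  \big[mulmx/1%:M]_(i < n) Pplus i.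

Definition Cmeas (n : nat) (rho : 'M[C]_(2 ^ n)) : C :=
  1 - \tr (Pplus_all n *m tens rho rho).

(* trace norm ||A||_1 = Tr sqrt(A^dagger A) = sum of square roots of the
   eigenvalues of the (normal, PSD) matrix A^dagger A *)
Definition trnorm (N : nat) (A : 'M[C]_N) : C :=
  \sum_(i < N) sqrtC (spectral_diag (A ^t* *m A) 0 i).

End Qubits.

(* With [P := Pplus_all n], a product of commuting orthogonal projections and hence
   itself one, [Cmeas rho = 1 - overlap P rho rho], where [overlap P X Y = Tr[P (X (x) Y)]]
   is bilinear; so for [D = rho - sigma],
   [Cmeas rho - Cmeas sigma = -(overlap P D rho + overlap P sigma D)].
   Expanding [D = sum_k e_k w_k^* w_k] and [rho = sum_m d_m u_m^* u_m] spectrally gives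
   [overlap P D rho = sum_k e_k c_k] with [c_k = sum_m d_m <w_k (x) u_m|P|w_k (x) u_m>]
   in [[0, 1]]; as [sum_k e_k = Tr D = 0], its modulus is at most [(sum_k |e_k|) / 2],
   and likewise for [overlap P sigma D].  Finally [sum_k |e_k| <= ||D||_1]. *)

From HB Require Import structures.
From mathcomp Require Import all_boot all_order all_algebra.
From mathcomp Require Import sesquilinear spectral.
From mathcomp Require Import fingroup perm zify ring.
Set Implicit Arguments. Unset Strict Implicit. Unset Printing Implicit Defensive.
Import Order.TTheory GRing.Theory Num.Theory.

Definition nbit (x j : nat) : bool := odd (x %/ 2 ^ j).

Definition of_bits (n : nat) (b : nat -> bool) : nat := \sum_(j < n) b j * 2 ^ j.

Lemma of_bitsS n b : of_bits n.+1 b = b 0 + 2 * of_bits n (fun j => b j.+1).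
Proof.
rewrite /of_bits big_ord_recl /= expn0 muln1 big_distrr /=; congr addn.
by apply: eq_bigr => j _; rewrite expnS mulnCA.
Qed.

Lemma eq_of_bits n b b' : (forall j, j < n -> b j = b' j) -> of_bits n b = of_bits n b'.
Proof. by move=> eq_b; apply: eq_bigr => j _; rewrite eq_b. Qed.

Lemma of_bits_lt n b : of_bits n b < 2 ^ n.
Proof.
elim: n b => [|n IHn] b; first by rewrite /of_bits big_ord0.
by rewrite of_bitsS expnS; have := IHn (fun j => b j.+1); case: (b 0) => /=; lia.
Qed.

Lemma nbit_of_bits n b j : j < n -> nbit (of_bits n b) j = b j.
Proof.
elim: n b j => [|n IHn] b [|j] //= lt_jn; rewrite of_bitsS /nbit.
  by rewrite expn0 divn1 oddD oddM /=; case: (b 0).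
rewrite expnS divnMA.
have -> : (b 0 + 2 * of_bits n (fun j => b j.+1)) %/ 2 = of_bits n (fun j => b j.+1).
  by case: (b 0) => /=; lia.
exact: IHn.
Qed.

Lemma of_bits_nbit n x : x < 2 ^ n -> of_bits n (nbit x) = x.
Proof.
elim: n x => [|n IHn] x lt_x; first by rewrite /of_bits big_ord0; lia.
rewrite of_bitsS (@eq_of_bits n _ (nbit (x %/ 2))); last first.
  by move=> j _; rewrite /nbit expnS divnMA.
rewrite IHn; last by rewrite ltn_divLR // mulnC -expnS.
by rewrite /nbit expn0 divn1 {3}(divn_eq x 2) modn2; case: (odd x) => /=; lia.
Qed.

Section PairIndex.
Variable N : nat.

Definition index_of (p : 'I_N * 'I_N) : 'I_(N * N) :=
  cast_ord (@mxvec_cast N N) (enum_rank p).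

Lemma index_ofK : cancel index_of (@pair_of N).
Proof. by move=> p; rewrite /pair_of /index_of cast_ordK enum_rankK. Qed.

Lemma pair_ofK : cancel (@pair_of N) index_of.
Proof. by move=> a; rewrite /pair_of /index_of enum_valK cast_ordKV. Qed.

End PairIndex.

Section QubitSwap.
Variable n : nat.
Local Notation N := (2 ^ n).

Definition ord_of_bits (b : nat -> bool) : 'I_N := Ordinal (of_bits_lt n b).

Lemma nbit_ord_of_bits b j : j < n -> nbit (ord_of_bits b) j = b j.
Proof. exact: nbit_of_bits. Qed.

Lemma eq_ord_nbit (x y : 'I_N) : (forall j, j < n -> nbit x j = nbit y j) -> x = y.
Proof.
move=> eq_xy; apply: val_inj => /=.
by rewrite -(of_bits_nbit (ltn_ord x)) -(of_bits_nbit (ltn_ord y)); apply: eq_of_bits.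
Qed.

Definition swap_qubit (i : nat) (p : 'I_N * 'I_N) : 'I_N * 'I_N :=
  (ord_of_bits (fun j => if j == i then nbit p.2 j else nbit p.1 j),
   ord_of_bits (fun j => if j == i then nbit p.1 j else nbit p.2 j)).

Lemma swap_qubitK i : involutive (swap_qubit i).
Proof.
move=> [x y]; rewrite /swap_qubit /=; congr pair; apply: eq_ord_nbit => j lt_jn;
  by rewrite !nbit_ord_of_bits //; case: eqP.
Qed.

Lemma swap_qubitC i k p : swap_qubit i (swap_qubit k p) = swap_qubit k (swap_qubit i p).
Proof.
case: p => x y; rewrite /swap_qubit /=; congr pair; apply: eq_ord_nbit => j lt_jn;
  by rewrite !nbit_ord_of_bits //; case: eqP; case: eqP.
Qed.

Lemma swapq_condE (i : 'I_n) (x y x' y' : 'I_N) :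
  [&& [forall j : 'I_n, (j != i) ==>
            ((qbit x j == qbit x' j) && (qbit y j == qbit y' j))],
         qbit x i == qbit y' i & qbit y i == qbit x' i]
  = ((x', y') == swap_qubit i (x, y)).
Proof.
apply/idP/eqP => [/and3P[/forallP eq_other /eqP eq_xy' /eqP eq_yx'] | [-> ->]].
  congr pair; apply: eq_ord_nbit => j lt_jn; rewrite nbit_ord_of_bits //;
  case: eqP => [-> // | ne_ji]; have := eq_other (Ordinal lt_jn);
  rewrite (introN eqP (fun e : Ordinal lt_jn = i => ne_ji (congr1 val e))) /=;
  by case/andP=> /eqP + /eqP.
apply/and3P; rewrite /qbit -!/(nbit _ _) !nbit_ord_of_bits // eqxx; split=> //.
apply/forallP => j; apply/implyP => ne_ji.
have ne_ji_nat : (nat_of_ord j == i) = false by apply/negbTE.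
by rewrite -!/(nbit _ _) !nbit_ord_of_bits // ne_ji_nat !eqxx.
Qed.

Definition swap_index (i : nat) (a : 'I_(N * N)) : 'I_(N * N) :=
  index_of (swap_qubit i (pair_of a)).

Lemma swap_indexK i : involutive (swap_index i).
Proof. by move=> a; rewrite /swap_index index_ofK swap_qubitK pair_ofK. Qed.

Definition swap_perm (i : nat) : 'S_(N * N) := perm (can_inj (swap_indexK i)).

Lemma swap_permV i : (swap_perm i)^-1%g = swap_perm i.
Proof.
apply: (mulgI (swap_perm i)); rewrite mulgV; apply/permP => a.
by rewrite permM perm1 !permE swap_indexK.
Qed.

Lemma swap_permC i k : commute (swap_perm i) (swap_perm k).
Proof.
by apply/permP => a; rewrite !permM !permE /swap_index !index_ofK swap_qubitC.
Qed.

End QubitSwap.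

Local Open Scope ring_scope.
Local Open Scope sesquilinear_scope.

Section OrthogonalProjections.
Variables (C : numClosedFieldType) (N : nat).
Implicit Types (P F : 'M[C]_N) (z : 'rV[C]_N).

Definition orthoproj P : Prop := P^t* = P /\ P *m P = P.

Lemma trmxC1 : (1%:M : 'M[C]_N)^t* = 1%:M.
Proof. by rewrite trmx1 map_mx1. Qed.

Lemma hermitian_involution_orthoproj F :
  F^t* = F -> F *m F = 1%:M -> orthoproj (2^-1 *: (1%:M + F)).
Proof.
move=> F_herm FF; split.
  by rewrite linearZ /= map_mxZ linearD /= map_mxD F_herm trmxC1 fmorphV rmorph_nat.
rewrite -scalemxAl -scalemxAr mulmxDl !mulmxDr mul1mx mulmx1 FF scalerA.
rewrite mul1mx (addrC F 1%:M) -mulr2n -scaler_nat scalerA; congr (_ *: _).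
by rewrite -mulrA mulVf ?mulr1 // pnatr_eq0.
Qed.

Lemma orthoproj_big_mulmx I (r : seq I) (Ps : I -> 'M[C]_N) :
  (forall i j, Ps i *m Ps j = Ps j *m Ps i) -> (forall i, orthoproj (Ps i)) ->
  orthoproj (\big[mulmx/1%:M]_(i <- r) Ps i).
Proof.
move=> Ps_comm Ps_proj.
suff [] : (forall j, comm_mx (\big[mulmx/1%:M]_(i <- r) Ps i) (Ps j)) /\
          orthoproj (\big[mulmx/1%:M]_(i <- r) Ps i) by [].
elim: r => [|i r [IHcomm [IHherm IHidem]]].
  rewrite big_nil; split=> [j|]; first by rewrite /comm_mx mul1mx mulmx1.
  by split; rewrite ?trmxC1 ?mulmx1.
rewrite big_cons; have [Pi_herm Pi_idem] := Ps_proj i.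
set Q := \big[mulmx/1%:M]_(j <- r) Ps j in IHcomm IHherm IHidem *.
split; first by move=> j; rewrite /comm_mx -mulmxA IHcomm mulmxA Ps_comm -mulmxA.
split; first by rewrite trmx_mul map_mxM IHherm Pi_herm IHcomm.
by rewrite -mulmxA (mulmxA Q) IHcomm -mulmxA IHidem mulmxA Pi_idem.
Qed.

Lemma orthoproj_compl P : orthoproj P -> orthoproj (1%:M - P).
Proof.
move=> [P_herm P_idem]; split; first by rewrite linearB /= map_mxB trmxC1 P_herm.
by rewrite mulmxBl !mulmxBr !mul1mx mulmx1 P_idem subrr subr0.
Qed.

Lemma orthoproj_form_ge0 P z : orthoproj P -> 0 <= (z *m P *m z^t*) 0 0.
Proof.
move=> [P_herm P_idem].
have -> : z *m P *m z^t* = (z *m P) *m (z *m P)^t*.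
  by rewrite trmx_mul map_mxM P_herm mulmxA -(mulmxA z P P) P_idem.
by rewrite -dotmxE dnorm_ge0.
Qed.

Lemma orthoproj_form_le P z : orthoproj P -> (z *m P *m z^t*) 0 0 <= (z *m z^t*) 0 0.
Proof.
move=> /orthoproj_compl/(orthoproj_form_ge0 z).
by rewrite mulmxBr mulmx1 mulmxBl [X in 0 <= X]mxE [X in 0 <= _ + X]mxE subr_ge0.
Qed.

End OrthogonalProjections.

Section Symmetrizers.
Variables (C : numClosedFieldType) (n : nat).

Lemma swapqE (i : 'I_n) : swapq C i = perm_mx (swap_perm n i).
Proof.
apply/matrixP => a b; rewrite !mxE permE.
have -> : (swap_index i a == b) = (pair_of b == swap_qubit i (pair_of a)).
  by rewrite /swap_index -{1}(pair_ofK b) (can_eq (@index_ofK _)) eq_sym.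
by case: (pair_of a) (pair_of b) => [x y] [x' y']; rewrite swapq_condE.
Qed.

Lemma Pplus_orthoproj (i : 'I_n) : orthoproj (Pplus C i).
Proof.
rewrite /Pplus swapqE; apply: hermitian_involution_orthoproj.
  by rewrite tr_perm_mx swap_permV map_perm_mx.
by rewrite -perm_mxM -{1}swap_permV mulVg perm_mx1.
Qed.

Lemma Pplus_comm (i k : 'I_n) : Pplus C i *m Pplus C k = Pplus C k *m Pplus C i.
Proof.
rewrite /Pplus !swapqE -!scalemxAl -!scalemxAr; congr (_ *: (_ *: _)).
rewrite !mulmxDl !mulmxDr !mul1mx !mulmx1 -!perm_mxM swap_permC.
by rewrite addrACA (addrC (perm_mx _)).
Qed.

Lemma Pplus_all_orthoproj : orthoproj (Pplus_all C n).
Proof. by apply: orthoproj_big_mulmx; [apply: Pplus_comm | apply: Pplus_orthoproj]. Qed.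

End Symmetrizers.

Section SpectralDecomposition.
Variables (C : numClosedFieldType) (N : nat).
Implicit Types (A B : 'M[C]_N).

Definition outermx m (w : 'rV[C]_m) : 'M[C]_m := w^t* *m w.

Lemma mulmx_row_form m (U : 'M[C]_(m, N)) A k l :
  (row k U *m A *m (row l U)^t*) 0 0 = (U *m A *m U^t*) k l.
Proof.
rewrite !mxE; apply: eq_bigr => j _; rewrite !mxE; congr (_ * _).
by apply: eq_bigr => i _; rewrite !mxE.
Qed.

Lemma spectral_row_norm1 A k :
  (row k (spectralmx A) *m (row k (spectralmx A))^t*) 0 0 = 1.
Proof. by rewrite -dotmxE (row_unitarymxP (spectral_unitarymx A)) eqxx. Qed.

Lemma spectral_decomposition A : A \is normalmx ->
  A = \sum_k spectral_diag A 0 k *: outermx (row k (spectralmx A)).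
Proof.
move/orthomx_spectralP => {1}->; rewrite invmx_unitary ?spectral_unitarymx //.
apply/matrixP => a b; rewrite mul_mx_diag !mxE summxE; apply: eq_bigr => k _.
by rewrite !mxE big_ord1 !mxE; ring.
Qed.

Lemma spectral_diagE A k : A \is normalmx ->
  spectral_diag A 0 k = (row k (spectralmx A) *m A *m (row k (spectralmx A))^t*) 0 0.
Proof.
have /unitarymxP U_unitary := spectral_unitarymx A.
move/orthomx_spectralP; rewrite mulmx_row_form invmx_unitary ?spectral_unitarymx //.
set U := spectralmx A; set d := spectral_diag A => ->.
by rewrite !mulmxA U_unitary mul1mx -mulmxA U_unitary mulmx1 mxE eqxx mulr1n.
Qed.

Lemma mxtrace_spectral A : A \is normalmx -> \tr A = \sum_k spectral_diag A 0 k.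
Proof.
have /unitarymxP U_unitary := spectral_unitarymx A.
move/orthomx_spectralP; rewrite invmx_unitary ?spectral_unitarymx //.
set U := spectralmx A; set d := spectral_diag A => ->.
by rewrite mxtrace_mulC mulmxA U_unitary mul1mx mxtrace_diag.
Qed.

Lemma psd_spectral_diag_ge0 A k :
  psdmx A -> A \is normalmx -> 0 <= spectral_diag A 0 k.
Proof. by move=> A_psd A_normal; rewrite spectral_diagE. Qed.

Lemma hermsymmxB A B : A \is hermsymmx -> B \is hermsymmx -> A - B \is hermsymmx.
Proof.
rewrite !is_hermitianmxE !expr0 !scale1r => /eqP A_herm /eqP B_herm.
by rewrite linearB /= map_mxB -A_herm -B_herm.
Qed.

End SpectralDecomposition.

Section TraceNorm.
Variables (C : numClosedFieldType) (N : nat).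
Implicit Types (A B D X Y W : 'M[C]_N).

Lemma norm_mxtrace_le_trnorm A : `|\tr A| <= trnorm A.
Proof.
(* Cauchy-Schwarz on each row of an orthonormal eigenbasis [Q] of [A^* A]. *)
set Q := spectralmx (A^t* *m A).
have QQ : Q^t* *m Q = 1%:M by apply/mulmx1C/unitarymxP/spectral_unitarymx.
have AA_normal : A^t* *m A \is normalmx.
  by apply: hermitian_normalmx; rewrite is_hermitianmxE expr0 scale1r trmx_mul map_mxM trmxCK.
have -> : \tr A = \sum_j dotmx (row j Q) (row j Q *m A^t*).
  have -> : \tr A = \tr (Q *m A *m Q^t*) by rewrite mxtrace_mulC mulmxA QQ mul1mx.
  apply: eq_bigr => j _.
  by rewrite dotmxE trmx_mul map_mxM trmxCK mulmxA mulmx_row_form.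
apply: le_trans (ler_norm_sum _ _ _) _; apply: ler_sum => j _.
apply: le_trans (CauchySchwarz_sqrt (@dotmx C N) _ _).1 _.
rewrite /= !dotmxE spectral_row_norm1 sqrtC1 mul1r.
by rewrite trmx_mul map_mxM trmxCK mulmxA spectral_diagE // !mulmxA.
Qed.

Lemma trnorm_gram A B : A^t* *m A = B^t* *m B -> trnorm A = trnorm B.
Proof. by rewrite /trnorm => ->. Qed.

Lemma trmxC_unitary_conj W X : (W^t* *m X *m W)^t* = W^t* *m X^t* *m W.
Proof. by rewrite !trmx_mul !map_mxM trmxCK mulmxA. Qed.

Lemma mulmx_unitary_conj W X Y : W \is unitarymx ->
  (W^t* *m X *m W) *m (W^t* *m Y *m W) = W^t* *m (X *m Y) *m W.
Proof. by move=> /unitarymxP WW; rewrite -!mulmxA (mulmxA W) WW mul1mx. Qed.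

Lemma sum_norm_spectral_le_trnorm D : D \is normalmx ->
  \sum_k `|spectral_diag D 0 k| <= trnorm D.
Proof.
have W_unitary := spectral_unitarymx D.
move/orthomx_spectralP; rewrite invmx_unitary //.
set W := spectralmx D in W_unitary *; set e := spectral_diag D => D_eq.
(* [absD = |D|] has the Gram matrix of [D] and trace [sum_k |e_k|]. *)
pose absD := W^t* *m diag_mx (\row_k `|e 0 k|) *m W.
have tr_absD : \tr absD = \sum_k `|e 0 k|.
  rewrite mxtrace_mulC mulmxA (unitarymxP W_unitary) mul1mx mxtrace_diag.
  by apply: eq_bigr => k _; rewrite mxE.
have gram_absD : absD^t* *m absD = D^t* *m D.
  rewrite D_eq !trmxC_unitary_conj !mulmx_unitary_conj //; congr (_ *m _ *m _).
  rewrite !tr_diag_mx !map_diag_mx !mulmx_diag; congr diag_mx; apply/rowP => k.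
  by rewrite !mxE -!normCKC normr_id.
rewrite -(trnorm_gram gram_absD) -tr_absD -[\tr absD]ger0_norm.
  exact: norm_mxtrace_le_trnorm.
by rewrite tr_absD sumr_ge0.
Qed.

End TraceNorm.

Section CenteredSums.
Variable R : numFieldType.

Lemma convex_comb_itv (J : finType) (d h : J -> R) :
  (forall j, 0 <= d j) -> \sum_j d j = 1 -> (forall j, 0 <= h j <= 1) ->
  0 <= \sum_j d j * h j <= 1.
Proof.
move=> d_ge0 d_sum1 h_itv; apply/andP; split.
  by apply: sumr_ge0 => j _; case/andP: (h_itv j) => h_ge0 _; rewrite mulr_ge0.
rewrite -d_sum1; apply: ler_sum => j _; case/andP: (h_itv j) => h_ge0 h_le1.
by rewrite ler_piMr.
Qed.

Lemma norm_centered_sum_le (I : finType) (e c : I -> R) :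
  \sum_i e i = 0 -> (forall i, 0 <= c i <= 1) ->
  `|\sum_i e i * c i| <= (\sum_i `|e i|) / 2.
Proof.
move=> e_sum0 c_itv.
(* Recentering [c] at [1/2] is free because the [e i] sum to zero. *)
have -> : \sum_i e i * c i = \sum_i e i * (c i - 2^-1).
  transitivity (\sum_i e i * c i - (\sum_i e i) * 2^-1); first by rewrite e_sum0 mul0r subr0.
  by rewrite mulr_suml -sumrB; apply: eq_bigr => i _; rewrite mulrBr.
rewrite mulr_suml; apply: le_trans (ler_norm_sum _ _ _) _; apply: ler_sum => i _.
rewrite normrM ler_wpM2l //; have /andP [c_ge0 c_le1] := c_itv i.
have half_ge0 : (0 : R) <= 2^-1 by rewrite invr_ge0 ler0n.
rewrite real_ler_norml; last by rewrite rpredB // ger0_real.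
by rewrite lerBrDr addNr c_ge0 lerBlDr -[2^-1]mul1r -splitr c_le1.
Qed.

Lemma norm_centered_double_sum_le (I J : finType) (e : I -> R) (d : J -> R)
    (h : I -> J -> R) :
  \sum_i e i = 0 -> (forall j, 0 <= d j) -> \sum_j d j = 1 ->
  (forall i j, 0 <= h i j <= 1) ->
  `|\sum_i e i * \sum_j d j * h i j| <= (\sum_i `|e i|) / 2.
Proof.
move=> e_sum0 d_ge0 d_sum1 h_itv; apply: norm_centered_sum_le => // i.
exact: convex_comb_itv.
Qed.

End CenteredSums.

Section Overlap.
Variables (C : numClosedFieldType) (N : nat) (P : 'M[C]_(N * N)).
Implicit Types (X Y : 'M[C]_N) (w u : 'rV[C]_N).

Definition overlap X Y := \tr (P *m tens X Y).

Lemma overlap_suml I (r : seq I) (a : I -> C) (Xs : I -> 'M[C]_N) Y :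
  overlap (\sum_(k <- r) a k *: Xs k) Y = \sum_(k <- r) a k * overlap (Xs k) Y.
Proof.
rewrite /overlap.
have -> : tens (\sum_(k <- r) a k *: Xs k) Y = \sum_(k <- r) a k *: tens (Xs k) Y.
  apply/matrixP => i j; rewrite !mxE !summxE big_distrl /=.
  by apply: eq_bigr => k _; rewrite !mxE mulrA.
by rewrite mulmx_sumr raddf_sum; apply: eq_bigr => k _; rewrite -scalemxAr /= mxtraceZ.
Qed.

Lemma overlap_sumr I (r : seq I) (a : I -> C) X (Ys : I -> 'M[C]_N) :
  overlap X (\sum_(k <- r) a k *: Ys k) = \sum_(k <- r) a k * overlap X (Ys k).
Proof.
rewrite /overlap.
have -> : tens X (\sum_(k <- r) a k *: Ys k) = \sum_(k <- r) a k *: tens X (Ys k).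
  apply/matrixP => i j; rewrite !mxE !summxE big_distrr /=.
  by apply: eq_bigr => k _; rewrite !mxE mulrCA.
by rewrite mulmx_sumr raddf_sum; apply: eq_bigr => k _; rewrite -scalemxAr /= mxtraceZ.
Qed.

Lemma overlap_spectral X Y : X \is normalmx -> Y \is normalmx ->
  overlap X Y = \sum_k spectral_diag X 0 k * \sum_m spectral_diag Y 0 m *
    overlap (outermx (row k (spectralmx X))) (outermx (row m (spectralmx Y))).
Proof.
move=> /spectral_decomposition {1}-> /spectral_decomposition {1}->.
by rewrite overlap_suml; apply: eq_bigr => k _; rewrite overlap_sumr.
Qed.

Lemma overlap_diagB X Y :
  overlap X X - overlap Y Y = overlap (X - Y) X + overlap Y (X - Y).
Proof.
rewrite /overlap -mxtraceD -raddfB /= -mulmxDr -mulmxBr; congr (\tr (_ *m _)).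
by apply/matrixP => a b; rewrite !mxE; ring.
Qed.

Definition kron_row w u : 'rV[C]_(N * N) :=
  \row_a (w 0 (pair_of a).1 * u 0 (pair_of a).2).

Lemma tens_outermx w u : tens (outermx w) (outermx u) = outermx (kron_row w u).
Proof. by apply/matrixP => a b; rewrite !mxE !big_ord1 !mxE rmorphM; ring. Qed.

Lemma kron_row_norm w u :
  (kron_row w u *m (kron_row w u)^t*) 0 0 = (w *m w^t*) 0 0 * (u *m u^t*) 0 0.
Proof.
rewrite !mxE big_distrlr /= pair_big /= (reindex (@index_of N)) /=; last first.
  by exists (@pair_of N) => p _; [apply: index_ofK | apply: pair_ofK].
by apply: eq_bigr => -[i j] _; rewrite !mxE index_ofK /= rmorphM; ring.
Qed.

Hypothesis P_proj : orthoproj P.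

Lemma overlap_outermx_itv w u : (w *m w^t*) 0 0 = 1 -> (u *m u^t*) 0 0 = 1 ->
  0 <= overlap (outermx w) (outermx u) <= 1.
Proof.
move=> w_norm1 u_norm1.
have -> : overlap (outermx w) (outermx u) = (kron_row w u *m P *m (kron_row w u)^t*) 0 0.
  by rewrite /overlap tens_outermx /outermx mulmxA mxtrace_mulC mulmxA trace_mx11.
rewrite orthoproj_form_ge0 //=.
by apply: le_trans (orthoproj_form_le _ P_proj) _; rewrite kron_row_norm w_norm1 u_norm1 mulr1.
Qed.

Lemma norm_overlap_centered_l D rho :
  D \is normalmx -> \tr D = 0 -> rho \is normalmx -> psdmx rho -> \tr rho = 1 ->
  `|overlap D rho| <= (\sum_k `|spectral_diag D 0 k|) / 2.
Proof.
move=> D_normal D_tr0 rho_normal rho_psd rho_tr1.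
rewrite overlap_spectral //; apply: norm_centered_double_sum_le.
- by rewrite -mxtrace_spectral.
- by move=> m; apply: psd_spectral_diag_ge0.
- by rewrite -mxtrace_spectral.
- by move=> k m; apply: overlap_outermx_itv; apply: spectral_row_norm1.
Qed.

Lemma norm_overlap_centered_r D rho :
  D \is normalmx -> \tr D = 0 -> rho \is normalmx -> psdmx rho -> \tr rho = 1 ->
  `|overlap rho D| <= (\sum_k `|spectral_diag D 0 k|) / 2.
Proof.
move=> D_normal D_tr0 rho_normal rho_psd rho_tr1.
rewrite overlap_spectral //; under eq_bigr do rewrite mulr_sumr.
rewrite exchange_big /=; under eq_bigr do under eq_bigr do rewrite mulrCA.
under eq_bigr do rewrite -mulr_sumr.
apply: norm_centered_double_sum_le.
- by rewrite -mxtrace_spectral.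
- by move=> m; apply: psd_spectral_diag_ge0.
- by rewrite -mxtrace_spectral.
- by move=> k m; apply: overlap_outermx_itv; apply: spectral_row_norm1.
Qed.

End Overlap.

Unset Implicit Arguments.
Set Strict Implicit.

Theorem mainTheorem18 (C : numClosedFieldType) (n : nat)
    (rho sigma : 'M[C]_(2 ^ n)) :
  density_matrix rho -> density_matrix sigma ->
  `|Cmeas rho - Cmeas sigma| <= trnorm (rho - sigma).
Proof.
move=> [rho_herm rho_psd rho_tr1] [sigma_herm sigma_psd sigma_tr1].
set P := Pplus_all C n; set D := rho - sigma.
have P_proj : orthoproj P := Pplus_all_orthoproj C n.
have D_normal : D \is normalmx := hermitian_normalmx (hermsymmxB rho_herm sigma_herm).
have D_tr0 : \tr D = 0 by rewrite raddfB /= rho_tr1 sigma_tr1 subrr.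
have -> : Cmeas rho - Cmeas sigma = - (overlap P D rho + overlap P sigma D).
  by rewrite -overlap_diagB /overlap /Cmeas; ring.
have bound_l := norm_overlap_centered_l P_proj D_normal D_tr0
  (hermitian_normalmx rho_herm) rho_psd rho_tr1.
have bound_r := norm_overlap_centered_r P_proj D_normal D_tr0
  (hermitian_normalmx sigma_herm) sigma_psd sigma_tr1.
rewrite normrN (le_trans (ler_normD _ _)) // (le_trans (lerD bound_l bound_r)) //.
by rewrite -splitr; apply: sum_norm_spectral_le_trnorm.
Qed.
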